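(* The convolution $(g_1\ast g_2)(A)=\min_{B\subseteq A}\,[g_1(B)+g_2(A\setminus B)]$ of two submodular functions $g_1,g_2$ is not in general submodular. In particular, there exist a directed graph $\mathcal{G}=(\mathcal{V},\mathcal{E})$ and a normalized monotone nondecreasing submodular $f:2^{\mathcal{E}}\to\mathbb{R}_+$ such that, with $\mathrm{cap}^{\mathrm{out}}(A)=\sum_{v\in\mathcal{V}}f(A\cap\delta^+(v))$ and $\mathrm{cap}^{\mathrm{in}}(A)=\sum_{v\in\mathcal{V}}f(A\cap\delta^-(v))$, the function $h=\mathrm{cap}^{\mathrm{out}}\ast\mathrm{cap}^{\mathrm{in}}$ (the cut cost function of the dual of the corresponding polymatroidal maximum flow) is not submodular.
   Context: $\delta^+(v)$ and $\delta^-(v)$ denote the sets of edges leaving and entering node $v$. A set function $g$ on $2^{\mathcal{E}}$ is submodular if $g(A)+g(B)\ge g(A\cup B)+g(A\cap B)$ for all $A,B\subseteq\mathcal{E}$. *)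

From HB Require Import structures.
From mathcomp Require Import all_boot all_order all_algebra.
Set Implicit Arguments. Unset Strict Implicit. Unset Printing Implicit Defensive.
Import Order.TTheory GRing.Theory Num.Theory.
Local Open Scope ring_scope.

Section Defs.
Variable R : realFieldType.

Definition submodular (T : finType) (g : {set T} -> R) : Prop :=
  forall A B : {set T}, g (A :|: B) + g (A :&: B) <= g A + g B.
Definition normalized (T : finType) (g : {set T} -> R) : Prop := g set0 = 0.
Definition monotone_nondecr (T : finType) (g : {set T} -> R) : Prop :=
  forall A B : {set T}, A \subset B -> g A <= g B.
Definition nonnegative (T : finType) (g : {set T} -> R) : Prop :=
  forall A : {set T}, 0 <= g A.

(* Convolution (g1 * g2)(A) = min_{B subset A} [g1 B + g2 (A \ B)].
   The fold's default value is the B = set0 term, which is itself in the range,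
   so this is exactly the minimum. *)
Definition convolution (T : finType) (g1 g2 : {set T} -> R) (A : {set T}) : R :=
  \big[Num.min/g1 set0 + g2 A]_(B in powerset A) (g1 B + g2 (A :\: B)).

Definition delta_out (V E : finType) (src : E -> V) (v : V) : {set E} :=
  [set e | src e == v].
Definition delta_in (V E : finType) (dst : E -> V) (v : V) : {set E} :=
  [set e | dst e == v].

Definition cap_out (V E : finType) (src : E -> V) (f : {set E} -> R)
  (A : {set E}) : R := \sum_(v : V) f (A :&: delta_out src v).
Definition cap_in (V E : finType) (dst : E -> V) (f : {set E} -> R)
  (A : {set E}) : R := \sum_(v : V) f (A :&: delta_in dst v).
End Defs.

From HB Require Import structures.
From mathcomp Require Import all_boot all_order all_algebra.
From mathcomp Require Import lra.
Import Order.TTheory GRing.Theory Num.Theory.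
Local Open Scope ring_scope.

(* Take f(X) = [X <> empty], so that cap_out A and cap_in A count the tails and
   the heads of the edges of A, and the graph a -> b <- c -> d with edges
   e0 = ab, e1 = cb, e2 = cd.  Both pairs {e0, e1} (common head) and {e1, e2}
   (common tail) have cut cost 1, whereas every split of {e0, e1, e2} touches
   two tails or two heads or one of each, and {e1} has cut cost 1: hence
   h(A) + h(B) = 2 < 3 = h(A u B) + h(A n B). *)

Section Convolution.
Variables (R : realFieldType) (T : finType) (g1 g2 : {set T} -> R).

Lemma convolution_le (A B : {set T}) :
  B \subset A -> convolution g1 g2 A <= g1 B + g2 (A :\: B).
Proof.
move=> sBA; rewrite /convolution (bigD1 B) /=; last by rewrite powersetE.
by rewrite ge_min lexx.
Qed.

Lemma le_convolution (A : {set T}) (c : R) :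
  (forall B : {set T}, B \subset A -> c <= g1 B + g2 (A :\: B)) ->
  c <= convolution g1 g2 A.
Proof.
move=> lec; apply: (big_ind (fun x => c <= x)).
- by have := lec set0 (sub0set A); rewrite setD0.
- by move=> x y cx cy; rewrite le_min cx cy.
- by move=> B; rewrite powersetE; apply: lec.
Qed.

End Convolution.

Lemma card_imset_gt0 {aT rT : finType} (g : aT -> rT) {A : {set aT}} {x} :
  x \in A -> (0 < #|g @: A|)%N.
Proof. by move=> xA; apply/card_gt0P; exists (g x); apply: imset_f. Qed.

Lemma card_imset_gt1 {aT rT : finType} (g : aT -> rT) {A : {set aT}} {x y} :
  x \in A -> y \in A -> g x != g y -> (1 < #|g @: A|)%N.
Proof.
by move=> xA yA gxy; apply/card_gt1P; exists (g x), (g y); rewrite !imset_f.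
Qed.

Lemma card_imset_le1 {aT rT : finType} (g : aT -> rT) (A : {set aT}) z :
  {in A, forall x, g x = z} -> (#|g @: A| <= 1)%N.
Proof.
move=> gAz; rewrite -(cards1 z); apply/subset_leq_card/subsetP.
by move=> _ /imsetP[x xA ->]; rewrite inE gAz.
Qed.

Section NonemptyIndicator.
Variables (R : realFieldType) (T : finType).

Definition nonempty_indicator (X : {set T}) : R := (X != set0)%:R.

Lemma nonempty_indicator_normalized : normalized nonempty_indicator.
Proof. by rewrite /normalized /nonempty_indicator eqxx. Qed.

Lemma nonempty_indicator_nonnegative : nonnegative nonempty_indicator.
Proof. by move=> A; rewrite ler0n. Qed.

Lemma nonempty_indicator_monotone : monotone_nondecr nonempty_indicator.
Proof.
move=> A B sAB; rewrite ler_nat.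
case: (set0Pn A) => [[x xA]|//].
by have /set0Pn-> : exists x, x \in B by exists x; apply: (subsetP sAB).
Qed.

Lemma nonempty_indicator_submodular : submodular nonempty_indicator.
Proof.
move=> A B; rewrite /nonempty_indicator -!natrD ler_nat setU_eq0 negb_and.
have [_|/set0Pn[x /setIP[xA xB]]] := eqVneq (A :&: B) set0.
  by rewrite addn0; case: (A != set0); case: (B != set0).
have /set0Pn-> : exists x, x \in A by exists x.
by have /set0Pn-> : exists x, x \in B by exists x.
Qed.

Lemma sum_nonempty_indicator_fibers (V : finType) (g : T -> V) (A : {set T}) :
  \sum_(v : V) nonempty_indicator (A :&: [set e | g e == v]) = #|g @: A|%:R.
Proof.
rewrite -natr_sum -sum1_card [in RHS]big_mkcond; congr (_%:R).
apply: eq_bigr => v _.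
have -> : (A :&: [set e | g e == v] != set0) = (v \in g @: A).
  apply/set0Pn/imsetP => [[e /setIP[eA /[1!inE]/eqP <-]]|[e eA ->]].
    by exists e.
  by exists e; rewrite inE eA inE eqxx.
by case: (v \in g @: A).
Qed.

Lemma cap_out_nonempty_indicator (V : finType) (src : T -> V) (A : {set T}) :
  cap_out src nonempty_indicator A = #|src @: A|%:R.
Proof. exact: sum_nonempty_indicator_fibers. Qed.

Lemma cap_in_nonempty_indicator (V : finType) (dst : T -> V) (A : {set T}) :
  cap_in dst nonempty_indicator A = #|dst @: A|%:R.
Proof. exact: sum_nonempty_indicator_fibers. Qed.

End NonemptyIndicator.

Definition va : 'I_4 := @Ordinal 4 0 isT.
Definition vb : 'I_4 := @Ordinal 4 1 isT.
Definition vc : 'I_4 := @Ordinal 4 2 isT.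
Definition vd : 'I_4 := @Ordinal 4 3 isT.
Definition e0 : 'I_3 := @Ordinal 3 0 isT.
Definition e1 : 'I_3 := @Ordinal 3 1 isT.
Definition e2 : 'I_3 := @Ordinal 3 2 isT.
Definition tail (e : 'I_3) : 'I_4 := if val e == 0%N then va else vc.
Definition head (e : 'I_3) : 'I_4 := if val e == 2%N then vd else vb.

Lemma tail_head_injective : injective (fun e => (tail e, head e)).
Proof.
move=> [x ltx3] [y lty3] eq_ends; apply: val_inj => /=.
by move: x y ltx3 lty3 eq_ends => [|[|[|x]]] [|[|[|y]]] // _ _ /eqP.
Qed.

Section CutCost.
Variable R : realFieldType.

Let cut_cost :=
  convolution (cap_out tail (@nonempty_indicator R _))
              (cap_in head (@nonempty_indicator R _)).

Lemma cut_cost_split_le {A B : {set 'I_3}} :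
  B \subset A -> cut_cost A <= (#|tail @: B| + #|head @: (A :\: B)|)%:R.
Proof.
move=> sBA; rewrite natrD -(cap_out_nonempty_indicator _ _ _ tail).
rewrite -(cap_in_nonempty_indicator _ _ _ head); exact: convolution_le.
Qed.

Lemma le_cut_cost (A : {set 'I_3}) (n : nat) :
  (forall B : {set 'I_3},
     B \subset A -> n <= #|tail @: B| + #|head @: (A :\: B)|)%N ->
  n%:R <= cut_cost A.
Proof.
move=> len; apply: le_convolution => B sBA.
by rewrite cap_out_nonempty_indicator cap_in_nonempty_indicator -natrD ler_nat len.
Qed.

Lemma cut_cost_common_head : cut_cost [set e0; e1] <= 1.
Proof.
apply: le_trans (cut_cost_split_le (sub0set _)) _.
rewrite imset0 cards0 setD0 lern1.
by apply: (card_imset_le1 head _ vb) => e; rewrite !inE => /orP[]/eqP->.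
Qed.

Lemma cut_cost_common_tail : cut_cost [set e1; e2] <= 1.
Proof.
apply: le_trans (cut_cost_split_le (subxx _)) _.
rewrite setDv imset0 cards0 addn0 lern1.
by apply: (card_imset_le1 tail _ vc) => e; rewrite !inE => /orP[]/eqP->.
Qed.

Lemma cut_cost_all_edges : 2 <= cut_cost ([set e0; e1] :|: [set e1; e2]).
Proof.
apply: le_cut_cost => B _.
have e0_or : e0 \in B \/ e0 \in ([set e0; e1] :|: [set e1; e2]) :\: B.
  by case: (boolP (e0 \in B)) => e0B; [left | right; rewrite in_setD e0B !inE].
have e2_or : e2 \in B \/ e2 \in ([set e0; e1] :|: [set e1; e2]) :\: B.
  by case: (boolP (e2 \in B)) => e2B; [left | right; rewrite in_setD e2B !inE].
case: e0_or e2_or => [e0B|e0D] [e2B|e2D].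
- exact: leq_trans (card_imset_gt1 tail e0B e2B isT) (leq_addr _ _).
- exact: leq_add (card_imset_gt0 _ e0B) (card_imset_gt0 _ e2D).
- exact: leq_add (card_imset_gt0 _ e2B) (card_imset_gt0 _ e0D).
- exact: leq_trans (card_imset_gt1 head e0D e2D isT) (leq_addl _ _).
Qed.

Lemma cut_cost_middle_edge : 1 <= cut_cost ([set e0; e1] :&: [set e1; e2]).
Proof.
apply: (le_cut_cost _ 1) => B _.
case: (boolP (e1 \in B)) => [e1B|e1nB].
  exact: leq_trans (card_imset_gt0 _ e1B) (leq_addr _ _).
have e1D : e1 \in ([set e0; e1] :&: [set e1; e2]) :\: B by rewrite !inE e1nB.
exact: leq_trans (card_imset_gt0 _ e1D) (leq_addl _ _).
Qed.

Lemma cut_cost_not_submodular : ~ submodular cut_cost.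
Proof.
move=> /(_ [set e0; e1] [set e1; e2]) submod.
have : 2 + 1 <= 1 + 1 :> R.
  apply: le_trans (lerD cut_cost_all_edges cut_cost_middle_edge) _.
  exact: le_trans submod (lerD cut_cost_common_head cut_cost_common_tail).
lra.
Qed.

End CutCost.

Theorem proposition2 (R : realFieldType) :
  exists (V E : finType) (src dst : E -> V) (f : {set E} -> R),
    injective (fun e => (src e, dst e)) /\
    normalized f /\ monotone_nondecr f /\ nonnegative f /\ submodular f /\
    ~ submodular (convolution (cap_out src f) (cap_in dst f)).
Proof.
exists 'I_4, 'I_3, tail, head, (@nonempty_indicator R _).
split; first exact: tail_head_injective.
split; first exact: nonempty_indicator_normalized.
split; first exact: nonempty_indicator_monotone.
split; first exact: nonempty_indicator_nonnegative.
split; first exact: nonempty_indicator_submodular.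
exact: cut_cost_not_submodular.
Qed.
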